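(* Let $\mathcal{H}$ be a $d$-dimensional Hilbert space, let $\mathcal{A}$ be an observable on $\mathcal{H}$ with orthonormal eigenbasis $\{|k\rangle\}_{k=0}^{d-1}$, and let $\rho_t$ be a family of density operators on $\mathcal{H}$ evolving under an arbitrary dynamics (in the Schrödinger picture) such that $\sqrt{\rho_t}$ is differentiable in $t$. Then for every $T>0$, the time needed to go from coherence $C(\rho_0,\mathcal{A})$ to $C(\rho_T,\mathcal{A})$ satisfies $$T\ \geq\ T_C=\frac{\sqrt{2}\,\bigl|\sqrt{C(\rho_0,\mathcal{A})}-\sqrt{C(\rho_T,\mathcal{A})}\bigr|}{\Bigl\langle\!\Bigl\langle \sqrt{\sum_{k=0}^{d-1}\lVert[\partial_t\sqrt{\rho_t},|k\rangle\langle k|]\rVert_{\rm HS}^2}\Bigr\rangle\!\Bigr\rangle_T}$$ (whenever the time average in the denominator is nonzero).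
   Context: The skew-information-based coherence of a state $\rho$ in the eigenbasis $\{|k\rangle\}$ of $\mathcal{A}$ is $C(\rho,\mathcal{A})=\sum_{k=0}^{d-1}I(\rho,|k\rangle\langle k|)=\frac12\sum_{k}\lVert[\sqrt{\rho},|k\rangle\langle k|]\rVert_{\rm HS}^2$, where $I(\rho,X)=\frac12\lVert[\sqrt\rho,X]\rVert_{\rm HS}^2$ is the skew information, $[X,Y]=XY-YX$, and $\lVert O\rVert_{\rm HS}=\sqrt{\operatorname{tr}(O^\dagger O)}$. For a function $X_t$, $\langle\!\langle X_t\rangle\!\rangle_T=\frac{1}{T}\int_0^T X_t\,dt$. *)

From HB Require Import structures.
From mathcomp Require Import all_boot all_order all_algebra.
From mathcomp Require Import all_classical all_reals all_analysis.
From mathcomp Require Import complex.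
Set Implicit Arguments. Unset Strict Implicit. Unset Printing Implicit Defensive.
Import Order.TTheory GRing.Theory Num.Theory.
Import numFieldNormedType.Exports.
Local Open Scope ring_scope.
Local Open Scope complex_scope.

Section QDefs.
Variable R : realType.
Local Notation C := R[i].

Definition dagger (m n : nat) (A : 'M[C]_(m, n)) : 'M[C]_(n, m) :=
  \matrix_(i, j) conjc (A j i).

Definition commut (d : nat) (X Y : 'M[C]_d) : 'M[C]_d := X *m Y - Y *m X.

(* squared Hilbert-Schmidt norm ||O||_HS^2 = tr(O^dagger O) = sum |O_ij|^2, as a real *)
Definition hs2 (d : nat) (O : 'M[C]_d) : R :=
  \sum_(i < d) \sum_(j < d) (complex.Re (O i j) ^+ 2 + complex.Im (O i j) ^+ 2).

Definition q_hermitian (d : nat) (A : 'M[C]_d) : Prop := dagger A = A.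

(* positive semidefinite: <v|A|v> is real and >= 0 for every vector v *)
Definition q_psd (d : nat) (A : 'M[C]_d) : Prop :=
  forall v : 'cV[C]_d, 0 <= (dagger v *m A *m v) 0 0.

Definition q_density (d : nat) (rho : 'M[C]_d) : Prop :=
  q_hermitian rho /\ q_psd rho /\ \tr rho = 1.

Definition q_sqrt (d : nat) (S rho : 'M[C]_d) : Prop :=
  q_hermitian S /\ q_psd S /\ S *m S = rho.

Definition q_unitary (d : nat) (U : 'M[C]_d) : Prop := dagger U *m U = 1%:M.

Definition kbproj (d : nat) (U : 'M[C]_d) (k : 'I_d) : 'M[C]_d :=
  col k U *m dagger (col k U).

Definition skew_info (d : nat) (sqrtrho X : 'M[C]_d) : R :=
  2^-1 * hs2 (commut sqrtrho X).

(* C(rho, A) = sum_k I(rho, |k><k|), where sqrtrho = sqrt rho and the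
   eigenbasis {|k>} of A is given by the columns of U *)
Definition coherence (d : nat) (sqrtrho U : 'M[C]_d) : R :=
  \sum_(k < d) skew_info sqrtrho (kbproj U k).

Definition mderiv (d : nat) (S : R -> 'M[C]_d) (t : R) : 'M[C]_d :=
  \matrix_(i, j) (derive1 (fun s => complex.Re (S s i j)) t
                   +i* derive1 (fun s => complex.Im (S s i j)) t).

Definition mderivable (d : nat) (S : R -> 'M[C]_d) (t : R) : Prop :=
  forall i j, derivable (fun s => complex.Re (S s i j)) t 1 /\
              derivable (fun s => complex.Im (S s i j)) t 1.

Definition time_avg (X : R -> R) (T : R) : R :=
  T^-1 * Rintegral lebesgue_measure `[0, T]%classic X.

End QDefs.

(* The commutators [X, |k><k|] of a matrix X, split into the real and imaginary
   parts of their entries, form a real vector Phi X that depends R-linearly on X,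
   with |Phi(sqrt rho)| = sqrt 2 sqrt C(rho) and |Phi(d/dt sqrt rho_t)| the
   integrand of the time average.  The bound is therefore the length estimate
   | |v(T)| - |v(0)| | <= |v(T) - v(0)| <= int_0^T |v'(t)| dt for v = Phi(sqrt rho_t),
   and the last inequality is applied to the scalar function <u, v(t)>, u the unit
   vector along v(T) - v(0), whose derivative is at most |v'| by Cauchy-Schwarz.
   Since the derivative only exists pointwise and |v'| is merely integrable,
   "phi' <= f implies phi(b) - phi(a) <= int_a^b f" needs a direct argument:
   outer regularity of Lebesgue measure gives open sets U_k containing
   the superlevel sets {f >= (k+1) d}, the function G(t) = d (t - a) +
   sum_k d mu(U_k cap [a, t]) exceeds int f by at most d (b - a) + e and grows
   faster than f(s) just to the right of every s, and a real induction compares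
   phi with G. *)

From HB Require Import structures.
From mathcomp Require Import all_boot all_order all_algebra.
From mathcomp Require Import all_classical all_reals all_analysis.
From mathcomp Require Import complex.
From mathcomp Require Import measurable_realfun ring lra.
Set Implicit Arguments.
Unset Strict Implicit.
Unset Printing Implicit Defensive.
Import Order.TTheory GRing.Theory Num.Theory.
Import numFieldNormedType.Exports.
Local Open Scope ring_scope.
Local Open Scope complex_scope.

Section RealInduction.
Context {R : realType}.
Local Open Scope classical_set_scope.

Lemma real_induction (a b : R) (P : R -> Prop) : a <= b ->
  P a ->
  (forall s, a < s <= b -> (forall u, a <= u < s -> P u) -> P s) ->
  (forall s, a <= s < b -> P s -> exists2 r, 0 < r & forall t, s < t < s + r -> P t) ->
  P b.
Proof.
move=> ab Pa Pleft Pright.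
pose S := [set t | a <= t <= b /\ forall u, a <= u <= t -> P u].
have Sa : S a.
  split=> [|u /andP[au ua]]; first by rewrite lexx ab.
  by have -> : u = a by apply/le_anti; rewrite ua au.
have S0 : S !=set0 by exists a.
have hS : has_ubound S by exists b => t [/andP[_ tb] _].
have aS : a <= sup S := ub_le_sup hS Sa.
have Sb : sup S <= b by apply: ge_sup S0 _ => t [/andP[_ tb] _].
have P_below u : a <= u < sup S -> P u.
  move=> /andP[au us]; have [y [_ Py] uy] := sup_gt S0 us.
  by apply: Py; rewrite au ltW.
have P_sup : P (sup S).
  have [as_|] := ltP a (sup S); first by apply: Pleft; [rewrite as_ Sb | exact: P_below].
  by move=> sa; have -> : sup S = a by apply/le_anti; rewrite sa aS.
have [sb|bs] := ltP (sup S) b; last by have <- : sup S = b by apply/le_anti; rewrite Sb bs.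
have [r r0 Pr] := Pright (sup S) ltac:(by rewrite aS sb) P_sup.
pose t := sup S + Num.min r (b - sup S) / 2.
have mr : 0 < Num.min r (b - sup S) by rewrite lt_min r0 subr_gt0 sb.
have mr1 : Num.min r (b - sup S) <= r by rewrite ge_min lexx.
have mr2 : Num.min r (b - sup S) <= b - sup S by rewrite ge_min lexx orbT.
have St : S t.
  split=> [|u /andP[au ut]]; first by apply/andP; split; rewrite /t; lra.
  have [us|su] := ltP u (sup S); first by apply: P_below; rewrite au us.
  have [<-|su'] := eqVneq (sup S) u; first exact: P_sup.
  by apply: Pr; apply/andP; split; [rewrite lt_neqAle su' su | rewrite /t in ut; lra].
by have := ub_le_sup hS St; rewrite /t; lra.
Qed.

Lemma increment_le_of_right_dominated (a b : R) (phi G : R -> R) : a <= b ->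
  (forall t, a <= t <= b -> {for t, continuous phi}) ->
  (forall u s, a <= u -> u <= s -> s <= b -> G u <= G s) ->
  (forall s eta, a <= s < b -> 0 < eta -> exists2 r, 0 < r &
     forall t, s < t < s + r -> t <= b -> phi t - phi s <= G t - G s + eta * (t - s)) ->
  phi b - phi a <= G b - G a.
Proof.
move=> ab cphi Gmono dom; apply/ler_addgt0Pr => e e0.
pose eta := e / (b - a + 1).
have eta0 : 0 < eta by rewrite divr_gt0 //; lra.
pose P t := t <= b -> phi t - phi a <= G t - G a + eta * (t - a).
suff : P b.
  move/(_ (lexx b)) /le_trans; apply; rewrite lerD2l.
  have ba1 : (b - a) / (b - a + 1) < 1 by rewrite ltr_pdivrMr; lra.
  by rewrite -[leRHS]mulr1 /eta -mulrA ler_pM2l // mulrC ltW.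
apply: (@real_induction a b P) => //.
- by move=> _; rewrite !subrr mulr0 addr0.
- move=> s /andP[as_ sb] Pu _; rewrite /P; apply/negPn/negP; rewrite -ltNge => gap.
  have gap0 : 0 < phi s - phi a - (G s - G a + eta * (s - a)) by rewrite subr_gt0.
  have := cphi s ltac:(by rewrite ltW // sb).
  move/cvgrPdist_lt => /(_ _ gap0) /nbhs_ballP [r r0 near_s].
  pose u := s - Num.min r (s - a) / 2.
  have m0 : 0 < Num.min r (s - a) by rewrite lt_min r0 subr_gt0 as_.
  have m1 : Num.min r (s - a) <= r by rewrite ge_min lexx.
  have m2 : Num.min r (s - a) <= s - a by rewrite ge_min lexx orbT.
  have au : a <= u by rewrite /u; lra.
  have us : u < s by rewrite /u; lra.
  have : `|phi s - phi u| < phi s - phi a - (G s - G a + eta * (s - a)).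
    by apply: near_s; rewrite /ball /= /u opprB addrC subrK ger0_norm; lra.
  rewrite ltr_norml => /andP[_ close].
  have Gus := Gmono u s au (ltW us) sb.
  have := Pu u ltac:(by rewrite au us) ltac:(lra).
  have : eta * (u - a) <= eta * (s - a) by rewrite ler_pM2l //; lra.
  lra.
- move=> s /andP[as_ sb] Ps.
  have [r r0 dom_s] := dom s eta ltac:(by rewrite as_ sb) eta0.
  exists r => // t /andP[st tsr] tb; rewrite /P.
  have := dom_s t ltac:(by rewrite st tsr) tb.
  have := Ps (ltW sb); lra.
Qed.

End RealInduction.

Section Superlevel.
Context {R : realType}.
Local Open Scope classical_set_scope.

Lemma sum_layers_le (d y : R) (N : nat) : 0 < d -> 0 <= y ->
  \sum_(0 <= k < N) d * ((k.+1%:R * d <= y)%R)%:R <= y.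
Proof.
move=> d0 y0; elim: N => [|N IH]; first by rewrite big_nil.
rewrite big_nat_recr //=; have [le_y|_] := boolP (N.+1%:R * d <= y); last first.
  by rewrite mulr0 addr0.
apply: le_trans le_y; rewrite mulr1 -natr1 mulrDl mul1r lerD2r.
apply: (@le_trans _ _ (\sum_(0 <= k < N) d)).
  apply: ler_sum => k _; apply: ler_piMr; first exact: ltW.
  by case: (k.+1%:R * d <= y)%R; rewrite ?ler01 ?lexx.
by rewrite sumr_const_nat subn0 mulr_natl.
Qed.

Definition superlevel {T : Type} (D : set T) (f : T -> R) (y : R) : set T :=
  D `&` [set x | y <= f x].

Lemma measurable_superlevel (dT : measure_display) (T : measurableType dT)
    (D : set T) (f : T -> R) (y : R) :
  measurable D -> measurable_fun D f -> measurable (superlevel D f y).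
Proof.
move=> mD mf; have -> : superlevel D f y = D `&` f @^-1` `[y, +oo[.
  by apply/seteqP; split => x /= [Dx fx]; split => //; move: fx; rewrite in_itv /= andbT.
exact: mf.
Qed.

Lemma sum_superlevel_le_integral (dT : measure_display) (T : measurableType dT)
    (mu : {measure set T -> \bar R}) (D : set T) (f : T -> R) (d : R) :
  measurable D -> measurable_fun D f -> (forall x, D x -> 0 <= f x) -> 0 < d ->
  (\sum_(0 <= k <oo) d%:E * mu (superlevel D f (k.+1%:R * d))
     <= \int[mu]_(x in D) (f x)%:E)%E.
Proof.
move=> mD mf f0 d0.
have mS k : measurable (superlevel D f (k.+1%:R * d)) by exact: measurable_superlevel.
apply: lime_le.
  by apply: is_cvg_nneseries => k _ _; apply: mule_ge0; rewrite // lee_fin ltW.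
apply: nearW => N; pose g k x := (d * \1_(superlevel D f (k.+1%:R * d)) x)%:E.
have mg k : measurable_fun D (g k).
  by apply/measurable_EFinP; apply: measurable_funM => //; exact: measurable_indic.
have g0 k x : D x -> (0 <= g k x)%E.
  by move=> _; rewrite lee_fin mulr_ge0 // ?ltW // indicE.
have -> : (\sum_(0 <= k < N) d%:E * mu (superlevel D f (k.+1%:R * d)) =
           \sum_(0 <= k < N) \int[mu]_(x in D) g k x)%E.
  apply: eq_bigr => k _; rewrite /g.
  under eq_integral do rewrite EFinM.
  rewrite ge0_integralZl_EFin ?ltW //; last first.
    by apply/measurable_EFinP; exact: measurable_indic.
  by rewrite integral_indic // setIidl //; exact: subIsetl.
rewrite -ge0_integral_sum //; apply: ge0_le_integral => //.
- by move=> x Dx; apply: sume_ge0 => k _; exact: g0.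
- exact: emeasurable_sum.
- exact/measurable_EFinP.
move=> x Dx; rewrite /g sumEFin lee_fin.
have indic_superlevel k : \1_(superlevel D f (k.+1%:R * d)) x = ((k.+1%:R * d <= f x)%R)%:R :> R.
  rewrite indicE; have [fx|fx] := boolP (k.+1%:R * d <= f x); first by rewrite mem_set.
  by rewrite memNset // => -[_ /=]; apply/negP.
under eq_bigr do rewrite indic_superlevel.
exact: sum_layers_le d0 (f0 x Dx).
Qed.

End Superlevel.

Section Cover.
Context {R : realType}.
Local Open Scope classical_set_scope.
Local Notation mu := (@lebesgue_measure R).

Lemma measure_itv_cover (V : set R) (a s t : R) : measurable V -> a <= s < t ->
  `]s, t] `<=` V -> (mu (V `&` `[a, s]) + (t - s)%:E <= mu (V `&` `[a, t]))%E.
Proof.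
move=> mV /andP[as_ st] stV.
have mVa x : measurable (V `&` `[a, x]) by exact: measurableI mV (measurable_itv _).
have disj : V `&` `[a, s] `&` `]s, t] = set0.
  apply/seteqP; split => x // [[_]]; rewrite /= !in_itv /= => /andP[_ xs] /andP[sx _].
  by move: (lt_le_trans sx xs); rewrite ltxx.
have -> : (t - s)%:E = mu `]s, t] by rewrite lebesgue_measure_itv /= lte_fin st -EFinB.
rewrite -(measureU mu (mVa s) (measurable_itv _) disj).
apply: le_measure; rewrite ?inE; [exact: measurableU (mVa s) (measurable_itv _) | exact: mVa |].
move=> x [[Vx]|]; rewrite /= !in_itv /=.
  by move=> /andP[ax xs]; split => //; rewrite ax (le_trans xs) // ltW.
move=> /andP[sx xt]; split; first by apply: stV; rewrite /= in_itv /= sx xt.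
by rewrite xt andbT (le_trans as_) // ltW.
Qed.

Variables (a b d e : R) (f : R -> R) (U : nat -> set R).
Hypotheses (d0 : 0 < d) (e0 : 0 < e) (f0 : forall x, `[a, b] x -> 0 <= f x)
  (intf : mu.-integrable `[a, b] (fun x => (f x)%:E)).
Hypotheses (openU : forall k, open (U k))
  (superlevel_subU : forall k, superlevel `[a, b] f (k.+1%:R * d) `<=` U k)
  (mu_U_superlevel : forall k,
    (mu (U k `\` superlevel `[a, b] f (k.+1%:R * d)) < ((e / d) / (2 ^ k.+1)%:R)%:E)%E).

Let measurable_U k : measurable (U k). Proof. exact: open_measurable. Qed.

Let cover t := (\sum_(0 <= k <oo) d%:E * mu (U k `&` `[a, t]))%E.

Let cover_term_ge0 t k : (0 <= d%:E * mu (U k `&` `[a, t]))%E.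
Proof. by apply: mule_ge0; rewrite // lee_fin ltW. Qed.

Let cover_ge0 t : (0 <= cover t)%E.
Proof. by apply: nneseries_ge0 => k _ _; exact: cover_term_ge0. Qed.

Let le_cover u s : u <= s -> (cover u <= cover s)%E.
Proof.
move=> us; apply: lee_nneseries => [k _ _|k _]; first exact: cover_term_ge0.
apply: lee_wpmul2l; first by rewrite lee_fin ltW.
apply: le_measure; rewrite ?inE; try exact: measurableI (measurable_U k) (measurable_itv _).
apply: setIS => x; rewrite /= !in_itv /= => /andP[-> xu].
exact: le_trans xu us.
Qed.

Let cover_b_le : (cover b <= \int[mu]_(x in `[a, b]) (f x)%:E + e%:E)%E.
Proof.
pose S k := superlevel `[a, b] f (k.+1%:R * d).
have mab : measurable `[a, b] by exact: measurable_itv.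
have mf : measurable_fun `[a, b] f by apply/measurable_EFinP; exact: measurable_int intf.
have mS k : measurable (S k) by exact: measurable_superlevel.
have d0E : (0 <= d%:E)%E by rewrite lee_fin ltW.
have term_le k :
    (d%:E * mu (U k `&` `[a, b]) <= d%:E * mu (S k) + (e / (2 ^ k.+1)%:R)%:E)%E.
  apply: (@le_trans _ _ (d%:E * mu (U k))%E).
    apply: lee_wpmul2l => //; apply: le_measure; rewrite ?inE.
    - exact: measurableI (measurable_U k) mab.
    - exact: measurable_U.
    - exact: subIsetl.
  rewrite (measureDI mu (measurable_U k) (mS k)) (setIidr (@superlevel_subU k)).
  rewrite ge0_muleDr // addeC leeD2l //.
  apply: le_trans (lee_wpmul2l d0E (ltW (mu_U_superlevel k))) _.
  rewrite -EFinM lee_fin; suff -> : d * (e / d / (2 ^ k.+1)%:R) = e / (2 ^ k.+1)%:R by [].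
  by field; rewrite !gt_eqF // ltr0n expn_gt0.
apply: (le_trans (lee_nneseries _ (fun k _ => term_le k))) => [k _ _|].
  exact: cover_term_ge0.
have eps := @epsilon_trick R (fun k => d%:E * mu (S k))%E e xpredT
  (fun k => mule_ge0 d0E (measure_ge0 _ _)) (ltW e0).
apply: (le_trans eps); apply: leeD => //.
exact: sum_superlevel_le_integral.
Qed.

Let cover_fin t : t <= b -> cover t \is a fin_num.
Proof.
move=> tb; rewrite ge0_fin_numE //; apply: (le_lt_trans (le_cover tb)).
apply: (le_lt_trans cover_b_le); rewrite lte_add_pinfty ?ltry //.
by apply: integrable_lty => //; exact: measurable_itv.
Qed.

Let cover_step s t m : a <= s < t -> (forall k, (k < m)%N -> `]s, t] `<=` U k) ->
  (cover s + (m%:R * (d * (t - s)))%:E <= cover t)%E.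
Proof.
move=> ast stU; pose jump k := if (k < m)%N then (d * (t - s))%:E else 0%E.
have st : s <= t by case/andP: ast => _ /ltW.
have jump_ge0 k : (0 <= jump k)%E.
  by rewrite /jump; case: ifP => // _; rewrite lee_fin mulr_ge0 // ?subr_ge0 // ltW.
have jumps : ((m%:R * (d * (t - s)))%:E <= \sum_(0 <= k <oo) jump k)%E.
  apply: le_trans (nneseries_lim_ge m (fun k _ _ => jump_ge0 k)).
  rewrite big_mkord /jump; under eq_bigr => k _ do rewrite ltn_ord.
  by rewrite sumEFin sumr_const card_ord mulr_natl.
apply: le_trans (leeD2l _ jumps) _; rewrite /cover -nneseriesD //.
apply: lee_nneseries => [k _ _|k _]; first by rewrite adde_ge0.
rewrite /jump; case: ifPn => [km|_]; last first.
  rewrite adde0; apply: lee_wpmul2l; first by rewrite lee_fin ltW.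
  apply: le_measure; rewrite ?inE; try exact: measurableI (measurable_U k) (measurable_itv _).
  by apply: setIS => x; rewrite /= !in_itv /= => /andP[-> /le_trans]; apply.
rewrite EFinM -ge0_muleDr ?lee_fin ?subr_ge0 //; apply: lee_wpmul2l; first by rewrite lee_fin ltW.
exact: measure_itv_cover (measurable_U k) ast (stU k km).
Qed.

Lemma cover_upper_function : exists G : R -> R,
  [/\ forall u s, u <= s -> s <= b -> G u <= G s,
      G b - G a <= Rintegral mu `[a, b] f + d * (b - a) + e &
      forall s, a <= s < b -> exists2 r, 0 < r &
        forall t, s < t < s + r -> t <= b -> (t - s) * f s <= G t - G s].
Proof.
exists (fun t => d * (t - a) + fine (cover t)); split.
- move=> u s us sb; apply: lerD; first by apply: ler_wpM2l; [exact: ltW | rewrite lerD2r].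
  by apply: fine_le; [exact: cover_fin (le_trans us sb) | exact: cover_fin | exact: le_cover].
- have cover_a := fine_ge0 (cover_ge0 a).
  have int_fin : (\int[mu]_(x in `[a, b]) (f x)%:E)%E \is a fin_num.
    by apply: integrable_fin_num => //; exact: measurable_itv.
  have int_e_fin : (\int[mu]_(x in `[a, b]) (f x)%:E + e%:E)%E \is a fin_num.
    by rewrite fin_numD int_fin.
  have := fine_le (cover_fin (lexx b)) int_e_fin cover_b_le.
  rewrite fineD //= -/(Rintegral _ _ _); lra.
- move=> s /andP[as_ sb].
  have s_ab : `[a, b] s by rewrite /= in_itv /= as_ ltW.
  have fs0 : 0 <= f s / d := divr_ge0 (f0 s_ab) (ltW d0).
  pose m := Num.truncn (f s / d); have /andP[mlo mhi] := truncn_itv fs0.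
  have fsm : f s < m.+1%:R * d by rewrite -ltr_pdivrMr.
  have sU k : (k < m)%N -> U k s.
    move=> km; apply: superlevel_subU; split => //=.
    apply: le_trans (_ : m%:R * d <= f s); last by rewrite -ler_pdivlMr.
    by apply: ler_wpM2r; [exact: ltW | rewrite ler_nat].
  have : \forall t \near s, forall k : 'I_m, U k t.
    apply: (@filter_forall _ _ (fun k : 'I_m => U k) (nbhs s)) => k.
    by apply: open_nbhs_nbhs; split; [exact: openU | exact: sU (ltn_ord k)].
  move/nbhs_ballP => [r r0 ballU]; exists r => // t /andP[st tsr] tb.
  have stU k : (k < m)%N -> `]s, t] `<=` U k.
    move=> km x; rewrite /= in_itv /= => /andP[sx xt].
    by apply: (ballU x _ (Ordinal km)); rewrite /ball /= ltr0_norm ?subr_lt0 //; lra.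
  have cover_s : cover s \is a fin_num := cover_fin (ltW sb).
  have cover_s_fin : (cover s + (m%:R * (d * (t - s)))%:E)%E \is a fin_num.
    by rewrite fin_numD cover_s.
  have ast : a <= s < t by rewrite as_ st.
  have := fine_le cover_s_fin (cover_fin tb) (cover_step ast stU).
  rewrite fineD //=; rewrite -natr1 in fsm.
  have : (t - s) * f s <= (t - s) * ((m%:R + 1) * d) by rewrite ler_pM2l ?subr_gt0 // ltW.
  lra.
Qed.

End Cover.

Section IntegralBound.
Context {R : realType}.
Local Open Scope classical_set_scope.
Local Notation mu := (@lebesgue_measure R).

Lemma integrable_upper_function (a b e : R) (f : R -> R) : a < b -> 0 < e ->
  (forall x, `[a, b] x -> 0 <= f x) -> mu.-integrable `[a, b] (fun x => (f x)%:E) ->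
  exists G : R -> R,
    [/\ forall u s, u <= s -> s <= b -> G u <= G s,
        G b - G a <= Rintegral mu `[a, b] f + e &
        forall s, a <= s < b -> exists2 r, 0 < r &
          forall t, s < t < s + r -> t <= b -> (t - s) * f s <= G t - G s].
Proof.
move=> ab e0 f0 intf; pose d := e / (2 * (b - a)).
have ba0 : 0 < b - a by rewrite subr_gt0.
have d0 : 0 < d by rewrite divr_gt0 // mulr_gt0.
have e20 : 0 < e / 2 by rewrite divr_gt0.
have mab : measurable `[a, b] by exact: measurable_itv.
have mf : measurable_fun `[a, b] f by apply/measurable_EFinP; exact: measurable_int intf.
have cover_superlevel k : exists U : set R,
    [/\ open U, superlevel `[a, b] f (k.+1%:R * d) `<=` U &
        (mu (U `\` superlevel `[a, b] f (k.+1%:R * d)) < ((e / 2 / d) / (2 ^ k.+1)%:R)%:E)%E].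
  apply: lebesgue_regularity_outer; first exact: measurable_superlevel.
    apply: (@le_lt_trans _ _ (mu `[a, b])); last by rewrite lebesgue_measure_itv /= lte_fin ab ltry.
    by apply: le_measure; rewrite ?inE; [exact: measurable_superlevel | | exact: subIsetl].
  by apply: divr_gt0; [exact: divr_gt0 | rewrite ltr0n expn_gt0].
have /choice [U HU] := cover_superlevel.
have [G [Gmono Gb Gright]] := cover_upper_function d0 e20 f0 intf
  (fun k => let: And3 oU _ _ := HU k in oU) (fun k => let: And3 _ sU _ := HU k in sU)
  (fun k => let: And3 _ _ muU := HU k in muU).
exists G; split => //; apply: le_trans Gb _.
rewrite -addrA lerD2l [leRHS]splitr lerD2r.
suff -> : d * (b - a) = e / 2 by [].
by rewrite /d; field; rewrite gt_eqF.
Qed.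

Lemma is_derive1_quotient_cvg (phi : R -> R) (t l : R) : is_derive t (1 : R) phi l ->
  (fun h => h^-1 * (phi (h + t) - phi t)) @ 0^' --> l.
Proof.
case=> derivable_phi <-.
have -> : (fun h => h^-1 * (phi (h + t) - phi t)) =
          (fun h => h^-1 *: ((phi \o shift t) (h *: 1) - phi t)).
  by apply/funext => h /=; rewrite /GRing.scale /= mulr1.
exact: derivable_phi.
Qed.

Lemma increment_le_Rintegral (a b : R) (phi phi' f : R -> R) : a < b ->
  (forall t, a <= t <= b -> {for t, continuous phi}) ->
  (forall t, a <= t < b -> is_derive t (1 : R) phi (phi' t)) ->
  (forall x, `[a, b] x -> 0 <= f x) ->
  (forall t, a <= t < b -> phi' t <= f t) ->
  mu.-integrable `[a, b] (fun x => (f x)%:E) ->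
  phi b - phi a <= Rintegral mu `[a, b] f.
Proof.
move=> ab cphi dphi f0 phi'_le intf; apply/ler_addgt0Pr => e e0.
have [G [Gmono Gb Gright]] := integrable_upper_function ab e0 f0 intf.
apply: le_trans Gb; apply: increment_le_of_right_dominated (ltW ab) cphi _ _.
  by move=> u s _; exact: Gmono.
move=> s eta sab eta0; have [r1 r10 Gs] := Gright s sab.
have := is_derive1_quotient_cvg (dphi s sab).
move/cvgrPdist_lt => /(_ eta eta0); rewrite near_withinE => /nbhs_ballP [r2 r20 quot].
exists (Num.min r1 r2) => [|t /andP[st tsr] tb]; first by rewrite lt_min r10 r20.
have ts0 : 0 < t - s by rewrite subr_gt0.
have tsr1 : t - s < r1 by move: tsr; rewrite -ltrBlDl lt_min => /andP[].
have tsr2 : t - s < r2 by move: tsr; rewrite -ltrBlDl lt_min => /andP[].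
have := quot (t - s); rewrite /ball /= sub0r normrN gtr0_norm // subrK.
move=> /(_ tsr2 (lt0r_neq0 ts0)); rewrite ltr_norml => /andP[close _].
have phi_s := phi'_le s sab; have Gts := Gs t ltac:(by rewrite st -ltrBlDl) tb.
have : (t - s)^-1 * (phi t - phi s) < f s + eta by lra.
rewrite ltr_pdivrMl // mulrDr [_ * eta]mulrC; lra.
Qed.

End IntegralBound.

Section EuclideanNorm.
Context {R : realType} {I : finType}.
Implicit Types x y : I -> R.

Definition l2norm x : R := Num.sqrt (\sum_i x i ^+ 2).

Lemma sumsq_ge0 x : 0 <= \sum_i x i ^+ 2.
Proof. by apply: sumr_ge0 => i _; exact: sqr_ge0. Qed.

Lemma l2norm_ge0 x : 0 <= l2norm x.
Proof. exact: sqrtr_ge0. Qed.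

Lemma sqr_l2norm x : l2norm x ^+ 2 = \sum_i x i ^+ 2.
Proof. by rewrite sqr_sqrtr // sumsq_ge0. Qed.

Lemma cauchy_schwarz_sqr x y :
  (\sum_i x i * y i) ^+ 2 <= (\sum_i x i ^+ 2) * (\sum_i y i ^+ 2).
Proof.
set A := \sum_i x i ^+ 2; set B := \sum_i y i ^+ 2; set C := \sum_i x i * y i.
have [A0|] := eqVneq A 0.
  have x0 i : x i = 0.
    by apply/eqP; rewrite -sqrf_eq0; apply/eqP/(psumr_eq0P (fun j _ => sqr_ge0 (x j)) A0).
  by rewrite /C big1 ?expr0n ?mulr_ge0 ?sumsq_ge0 // => i _; rewrite x0 mul0r.
rewrite neq_lt ltNge sumsq_ge0 /= => A_gt0.
have : 0 <= A * (A * B - C ^+ 2).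
  suff <- : \sum_i (x i * C - y i * A) ^+ 2 = A * (A * B - C ^+ 2) by exact: sumsq_ge0.
  transitivity (\sum_i (C ^+ 2 * x i ^+ 2 - (2 * C * A) * (x i * y i) + A ^+ 2 * y i ^+ 2)).
    by apply: eq_bigr => i _; ring.
  by rewrite big_split /= sumrB -!mulr_sumr -/A -/B -/C; ring.
by rewrite pmulr_rge0 // subr_ge0 mulrC.
Qed.

Lemma cauchy_schwarz x y : \sum_i x i * y i <= l2norm x * l2norm y.
Proof.
rewrite /l2norm -sqrtrM ?sumsq_ge0 //; apply: le_trans (ler_norm _) _.
by rewrite -sqrtr_sqr; apply: ler_wsqrtr; exact: cauchy_schwarz_sqr.
Qed.

Lemma l2norm_triangle x y : l2norm (fun i => x i + y i) <= l2norm x + l2norm y.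
Proof.
rewrite -(ler_pXn2r (_ : (0 < 2)%N)) ?nnegrE ?addr_ge0 ?l2norm_ge0 // sqr_l2norm.
have -> : \sum_i (x i + y i) ^+ 2 =
          \sum_i x i ^+ 2 + 2 * \sum_i x i * y i + \sum_i y i ^+ 2.
  by rewrite mulr_sumr -!big_split /=; apply: eq_bigr => i _; ring.
rewrite sqrrD -!sqr_l2norm lerD2r lerD2l; have := cauchy_schwarz x y; lra.
Qed.

Lemma l2norm_dist x y : `|l2norm x - l2norm y| <= l2norm (fun i => x i - y i).
Proof.
have le_dist z w : l2norm z <= l2norm (fun i => z i - w i) + l2norm w.
  have := l2norm_triangle (fun i => z i - w i) w.
  by rewrite (_ : (fun i => z i - w i + w i) = z) //; apply/funext => i; rewrite subrK.
have dist_sym : l2norm (fun i => y i - x i) = l2norm (fun i => x i - y i).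
  by congr Num.sqrt; apply: eq_bigr => i _; rewrite -sqrrN opprB.
have := le_dist x y; have := le_dist y x; rewrite dist_sym ler_norml; lra.
Qed.

End EuclideanNorm.

Section MatrixPaths.
Context {R : realType} {d : nat}.
Local Notation M := 'M[R[i]]_d.

Lemma rlinear_mx_decomp (L : M -> R) :
  (forall X Y, L (X + Y) = L X + L Y) -> (forall (r : R) X, L (r%:C *: X) = r * L X) ->
  forall X, L X = \sum_(i < d) \sum_(j < d)
    (L (delta_mx i j) * complex.Re (X i j) + L ('i *: delta_mx i j) * complex.Im (X i j)).
Proof.
move=> LD LZ X.
have L0 : L 0 = 0 by have := LZ 0 0; rewrite mul0r scale0r.
have Lsum (J : Type) (r : seq J) (F : J -> M) : L (\sum_(j <- r) F j) = \sum_(j <- r) L (F j).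
  exact: (big_morph L LD L0).
rewrite {1}(matrix_sum_delta X) Lsum; apply: eq_bigr => i _; rewrite Lsum.
apply: eq_bigr => j _.
have XE : X i j = (complex.Re (X i j))%:C + (complex.Im (X i j))%:C * 'i.
  case: (X i j) => x y; apply/eqP.
  by rewrite eq_complex /= !mul0r !mulr0 !subr0 !addr0 mulr1 add0r !eqxx.
by rewrite {1}XE scalerDl LD -scalerA !LZ mulrC [_ * complex.Im _]mulrC.
Qed.

Lemma is_derive_rlinear_mx (L : M -> R) (S : R -> M) (t : R) :
  (forall X Y, L (X + Y) = L X + L Y) -> (forall (r : R) X, L (r%:C *: X) = r * L X) ->
  mderivable S t -> is_derive t (1 : R) (fun s => L (S s)) (L (mderiv S t)).
Proof.
move=> LD LZ dS; have E := rlinear_mx_decomp LD LZ.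
pose re i j s := complex.Re (S s i j); pose im i j s := complex.Im (S s i j).
have dre i j : is_derive t (1 : R) (re i j) (derive1 (re i j) t).
  by rewrite derive1E; apply: derivableP; case: (dS i j).
have dim i j : is_derive t (1 : R) (im i j) (derive1 (im i j) t).
  by rewrite derive1E; apply: derivableP; case: (dS i j).
have := @is_derive_sum _ _ _ d (fun i => \sum_(j < d)
   (L (delta_mx i j) \*: re i j + L ('i *: delta_mx i j) \*: im i j)) t 1 _
   (fun i => @is_derive_sum _ _ _ d _ t 1 _ (fun j =>
      is_deriveD (is_deriveZ (L (delta_mx i j)) (dre i j))
                 (is_deriveZ (L ('i *: delta_mx i j)) (dim i j)))).
congr is_derive.
  apply/funext => s; rewrite E !fct_sumE; apply: eq_bigr => i _; rewrite fct_sumE.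
  by apply: eq_bigr => j _.
by rewrite E; apply: eq_bigr => i _; apply: eq_bigr => j _; rewrite /mderiv !mxE.
Qed.

Local Notation mu := (@lebesgue_measure R).

Lemma l2dist_le_Rintegral (I : finType) (Phi : M -> I -> R) (S : R -> M) (a b : R) :
  (forall X Y i, Phi (X + Y) i = Phi X i + Phi Y i) ->
  (forall (r : R) X i, Phi (r%:C *: X) i = r * Phi X i) ->
  a < b -> (forall t, a <= t <= b -> mderivable S t) ->
  mu.-integrable `[a, b]%classic (fun t => (l2norm (Phi (mderiv S t)))%:E) ->
  l2norm (fun i => Phi (S b) i - Phi (S a) i)
    <= Rintegral mu `[a, b]%classic (fun t => l2norm (Phi (mderiv S t))).
Proof.
move=> PhiD PhiZ ab dS intf; set w := fun i => _; set n := l2norm w.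
have [->|n_neq0] := eqVneq n 0; first by apply: Rintegral_ge0 => t _; exact: l2norm_ge0.
have n_gt0 : 0 < n by rewrite lt_neqAle eq_sym n_neq0 l2norm_ge0.
pose L X := n^-1 * \sum_i w i * Phi X i.
have LD X Y : L (X + Y) = L X + L Y.
  by rewrite /L -mulrDr -big_split; congr (_ * _); apply: eq_bigr => i _; rewrite PhiD mulrDr.
have LZ (r : R) X : L (r%:C *: X) = r * L X.
  rewrite /L (eq_bigr (fun i => r * (w i * Phi X i))) => [|i _]; last by rewrite PhiZ mulrCA.
  by rewrite -mulr_sumr mulrCA.
have dL t : a <= t <= b -> is_derive t (1 : R) (fun s => L (S s)) (L (mderiv S t)).
  by move=> tab; apply: is_derive_rlinear_mx LD LZ (dS t tab).
have -> : n = L (S b) - L (S a).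
  rewrite /L -mulrBr -sumrB.
  under eq_bigr do rewrite -mulrBr -expr2.
  by rewrite -sqr_l2norm -/n expr2 mulKf.
apply: (@increment_le_Rintegral _ _ _ (fun s => L (S s)) (fun t => L (mderiv S t)) _ ab) intf.
- move=> t tab; have [derivable_L _] := dL t tab.
  by apply: differentiable_continuous; apply/derivable1_diffP.
- by move=> t /andP[at_ tb]; apply: dL; rewrite at_ ltW.
- by move=> t _; exact: l2norm_ge0.
- move=> t _; rewrite /L ler_pdivrMl //; exact: cauchy_schwarz.
Qed.

End MatrixPaths.

Section Coordinates.
Context {R : realType} {d : nat}.
Local Notation M := 'M[R[i]]_d.

Definition reim (z : R[i]) (b : bool) : R := if b then complex.Re z else complex.Im z.

Lemma reimD (z w : R[i]) b : reim (z + w) b = reim z b + reim w b.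
Proof. by case: b; case: z; case: w. Qed.

Lemma reimZ (r : R) (z : R[i]) b : reim (r%:C * z) b = r * reim z b.
Proof. by case: b; case: z => x y /=; rewrite !mul0r ?subr0 ?addr0. Qed.

Definition mx_coords (W : 'I_d -> M) (x : 'I_d * 'I_d * 'I_d * bool) : R :=
  reim (W x.1.1.1 x.1.1.2 x.1.2) x.2.

Lemma sum_hs2E (W : 'I_d -> M) : \sum_k hs2 (W k) = \sum_x mx_coords W x ^+ 2.
Proof.
transitivity (\sum_k \sum_i \sum_j \sum_(b : bool) reim (W k i j) b ^+ 2).
  by apply: eq_bigr => k _; apply: eq_bigr => i _; apply: eq_bigr => j _; rewrite big_bool.
by rewrite !pair_big; apply: eq_bigr => -[[[k i] j] b].
Qed.

Lemma commutDl (X Y Z : M) : commut (X + Y) Z = commut X Z + commut Y Z.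
Proof. by rewrite /commut mulmxDl mulmxDr opprD addrACA. Qed.

Lemma commutZl (a : R[i]) (X Z : M) : commut (a *: X) Z = a *: commut X Z.
Proof. by rewrite /commut -scalemxAl -scalemxAr -scalerBr. Qed.

Lemma sqrt2_sqrt_coherence (S U : M) :
  Num.sqrt 2 * Num.sqrt (coherence S U) = Num.sqrt (\sum_k hs2 (commut S (kbproj U k))).
Proof. by rewrite /coherence /skew_info -mulr_sumr -sqrtrM ?ler0n // mulrA mulfV ?mul1r. Qed.

End Coordinates.

Theorem theorem2 (R : realType) (d : nat) (A U : 'M[R[i]]_d) (lam : 'I_d -> R)
    (rho sqrtrho : R -> 'M[R[i]]_d) (T : R) :
  q_hermitian A ->
  q_unitary U ->
  (forall k : 'I_d, A *m col k U = (Complex (lam k) 0) *: col k U) ->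
  (forall t, q_density (rho t)) ->
  (forall t, q_sqrt (sqrtrho t) (rho t)) ->
  (forall t, t \in `[0, T] -> mderivable sqrtrho t) ->
  0 < T ->
  let f := fun t => Num.sqrt (\sum_(k < d) hs2 (commut (mderiv sqrtrho t) (kbproj U k))) in
  lebesgue_measure.-integrable `[0, T]%classic (fun t => (f t)%:E) ->
  time_avg f T != 0 ->
  T >= Num.sqrt 2 * `| Num.sqrt (coherence (sqrtrho 0) U)
                       - Num.sqrt (coherence (sqrtrho T) U) | / time_avg f T.
Proof.
move=> _ _ _ _ _ dS T_gt0 f intf avg_neq0.
pose Phi X := mx_coords (fun k => commut X (kbproj U k)).
have PhiD X Y x : Phi (X + Y) x = Phi X x + Phi Y x.
  by rewrite /Phi /mx_coords commutDl mxE reimD.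
have PhiZ (r : R) X x : Phi (r%:C *: X) x = r * Phi X x.
  by rewrite /Phi /mx_coords commutZl mxE reimZ.
have normE X : Num.sqrt (\sum_k hs2 (commut X (kbproj U k))) = l2norm (Phi X).
  by rewrite /l2norm sum_hs2E.
have fE : f = fun t => l2norm (Phi (mderiv sqrtrho t)) by apply/funext => t; exact: normE.
clearbody f; subst f.
have dS' t : 0 <= t <= T -> mderivable sqrtrho t by move=> tT; apply: dS; rewrite in_itv.
have := l2dist_le_Rintegral PhiD PhiZ T_gt0 dS' intf.
set I := Rintegral _ _ _ => dist_le.
have avgE : time_avg (fun t => l2norm (Phi (mderiv sqrtrho t))) T = T^-1 * I by [].
have I_gt0 : 0 < I.
  rewrite lt_neqAle eq_sym Rintegral_ge0 ?andbT => [|t _]; last exact: l2norm_ge0.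
  by apply: contraNneq avg_neq0 => I0; rewrite avgE I0 mulr0.
rewrite avgE invfM invrK mulrA ler_pdivrMr ?mulr_gt0 ?invr_gt0 //.
rewrite [leRHS]mulrC ler_pM2r //.
rewrite -(ger0_norm (sqrtr_ge0 2)) -normrM mulrBr !sqrt2_sqrt_coherence !normE distrC.
exact: le_trans (l2norm_dist _ _) dist_le.
Qed.
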